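(* Let $t\ge 3$ and let $\mathcal{H}$ be an $n$-vertex $3$-uniform hypergraph that does not contain $K_{2,t}$ as a trace. Let $A$ be the set of edges of $\mathcal{H}$ containing at least one pair of vertices whose co-degree in $\mathcal{H}$ is $1$, and let $B=\mathcal{H}\setminus A$. For a vertex $x$, let $N_1(x)=\{z: \exists e\in B,\ \{x,z\}\subseteq e\}$ and $N_2(x)=\{z\notin N_1(x)\cup\{x\}: \exists e\in B,\ z\in e,\ e\cap N_1(x)\neq\emptyset\}$. Fix a vertex $v$, and for $u\in N_1(v)$ let $E_u=\{e\in B: e\cap N_1(v)=\{u\}\}$ and $V_u=\{w\in N_2(v): \exists e\in E_u,\ w\in e\}$. If $\{v,u,w\}\in B$ is any edge containing $v$, then $|V_u\cap V_w|\le (t-1)(6t-2)$.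
   Context: A hypergraph $\mathcal{H}$ contains a graph $F$ (vertices $v_1,\dots,v_p$, edges $e_1,\dots,e_q$) as a trace if there exist distinct vertices $w_1,\dots,w_p\in V(\mathcal{H})$ and distinct edges $f_1,\dots,f_q\in E(\mathcal{H})$ such that whenever $e_i=v_\alpha v_\beta$, $f_i\cap\{w_1,\dots,w_p\}=\{w_\alpha,w_\beta\}$. The co-degree of a pair $\{x,y\}$ in $\mathcal{H}$ is the number of edges of $\mathcal{H}$ containing $\{x,y\}$. $\mathcal{H}\setminus A$ denotes the hypergraph on $V(\mathcal{H})$ with edge set $E(\mathcal{H})\setminus A$. *)

From mathcomp Require Import all_boot.
Set Implicit Arguments. Unset Strict Implicit. Unset Printing Implicit Defensive.

Definition uniform (T : finType) (k : nat) (H : {set {set T}}) : Prop :=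
  forall e, e \in H -> #|e| = k.

(* A graph F with vertex type V and edge type E, each edge i having the
   (distinct) endpoints (ends i).1 and (ends i).2.  H contains F as a trace
   if there are injective maps w : V -> T and f : E -> {set T} with
   f i \in H and f i :&: w(V) = {w a, w b} where ends i = (a,b). *)
Definition contains_trace (T V E : finType) (ends : E -> V * V)
  (H : {set {set T}}) : Prop :=
  exists (w : V -> T) (f : E -> {set T}),
    [/\ injective w, injective f,
        forall i, f i \in H &
        forall i, f i :&: (w @: [set: V]) = [set w (ends i).1; w (ends i).2]].

Definition K2t_ends (t : nat) (i : 'I_2 * 'I_t) : ('I_2 + 'I_t) * ('I_2 + 'I_t) :=
  (inl i.1, inr i.2).

Definition contains_K2t_trace (T : finType) (t : nat) (H : {set {set T}}) : Prop :=
  @contains_trace T ('I_2 + 'I_t)%type ('I_2 * 'I_t)%type (@K2t_ends t) H.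

Definition codeg (T : finType) (H : {set {set T}}) (x y : T) : nat :=
  #|[set e in H | (x \in e) && (y \in e)]|.

Definition setA (T : finType) (H : {set {set T}}) : {set {set T}} :=
  [set e in H | [exists x, exists y,
     [&& x != y, x \in e, y \in e & codeg H x y == 1]]].

Definition setB (T : finType) (H : {set {set T}}) : {set {set T}} :=
  H :\: setA H.

Definition N1 (T : finType) (H : {set {set T}}) (x : T) : {set T} :=
  [set z | (z != x) && [exists e in setB H, (x \in e) && (z \in e)]].

Definition N2 (T : finType) (H : {set {set T}}) (x : T) : {set T} :=
  [set z | (z \notin N1 H x) && (z != x) &&
     [exists e in setB H, (z \in e) && (e :&: N1 H x != set0)]].

Definition Eu (T : finType) (H : {set {set T}}) (v u : T) : {set {set T}} :=
  [set e in setB H | e :&: N1 H v == [set u]].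

Definition Vu (T : finType) (H : {set {set T}}) (v u : T) : {set T} :=
  [set w in N2 H v | [exists e in Eu H v u, w \in e]].

From mathcomp Require Import all_boot zify.
Set Implicit Arguments. Unset Strict Implicit. Unset Printing Implicit Defensive.

(* For x in S := V_u ∩ V_w choose edges e_u(x) ∈ E_u and e_w(x) ∈ E_w through x.
   Such an edge meets N1(v) only in its centre, so it has exactly one vertex
   outside N1(v) ∪ {x}; the digraph on S sending x to the vertices of
   e_u(x) ∪ e_w(x) thus has out-degree at most 2.  Greedily deleting a vertex
   of total degree at most 4 together with its neighbours yields t pairwise
   non-adjacent x_1, ..., x_t as soon as |S| > 5(t-1), and then the edges
   e_u(x_j), e_w(x_j) form a trace of K_{2,t} with centres u and w.  Hence
   |S| <= 5(t-1) <= (t-1)(6t-2). *)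


Definition independent (T : finType) (N : T -> {set T}) (X : {set T}) : Prop :=
  {in X &, forall a b, a != b -> b \notin N a}.

Lemma card_setIdx (T : finType) (S : {set T}) (P : pred T) :
  #|[set y in S | P y]| = \sum_(y in S) P y.
Proof.
rewrite -sum1_card big_mkcond [RHS]big_mkcond; apply: eq_bigr => y _.
by rewrite !inE; case: (y \in S); case: (P y).
Qed.

Section BoundedOutDegree.
Variables (T : finType) (N : T -> {set T}) (d : nat).

Lemma sum_card_in_neighbours (S : {set T}) :
  \sum_(x in S) #|[set y in S | x \in N y]| = \sum_(y in S) #|N y :&: S|.
Proof.
under eq_bigr do rewrite card_setIdx.
rewrite exchange_big; apply: eq_bigr => y _.
by rewrite -card_setIdx; apply: eq_card => z; rewrite !inE andbC.
Qed.

Lemma exists_low_total_degree (S : {set T}) :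
  {in S, forall x, #|N x :&: S| <= d} -> S != set0 ->
  exists2 x, x \in S & #|N x :&: S| + #|[set y in S | x \in N y]| <= 2 * d.
Proof.
move=> outS /set0Pn[x0 x0S].
apply/exists_inP; apply/contraT; rewrite negb_exists_in => /forall_inP high.
have : \sum_(x in S) (2 * d).+1 <=
       \sum_(x in S) (#|N x :&: S| + #|[set y in S | x \in N y]|).
  by apply: leq_sum => x /high; rewrite ltnNge.
rewrite big_split /= sum_card_in_neighbours sum_nat_const.
have : \sum_(y in S) #|N y :&: S| <= #|S| * d by rewrite -sum_nat_const; exact: leq_sum.
have : 0 < #|S| by apply/card_gt0P; exists x0.
nia.
Qed.

Lemma independentU1 (x : T) (X : {set T}) :
  independent N X -> {in X, forall y, y \notin N x /\ x \notin N y} ->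
  independent N (x |: X).
Proof.
move=> indX away a b; rewrite !in_setU1.
case/orP=> [/eqP->|aX] /orP[/eqP->|bX]; rewrite ?eqxx //.
- by case: (away b bX).
- by case: (away a aX).
- exact: indX.
Qed.

Lemma exists_independent_subset (k : nat) (S : {set T}) :
  {in S, forall x, #|N x :&: S| <= d} -> (2 * d).+1 * k < #|S| ->
  exists X : {set T}, [/\ X \subset S, #|X| = k.+1 & independent N X].
Proof.
elim: k S => [|k IH] S outS bigS.
  have [x xS] : exists x, x \in S by apply/card_gt0P; rewrite -(muln0 (2 * d).+1).
  exists [set x]; split; rewrite ?sub1set ?cards1 //.
  by move=> a b /set1P-> /set1P->; rewrite eqxx.
have [|x xS lowx] := exists_low_total_degree outS.
  by rewrite -card_gt0; apply: leq_ltn_trans bigS.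
pose R := x |: ((N x :&: S) :|: [set y in S | x \in N y]).
have cardR : #|R| <= (2 * d).+1 by rewrite cardsU1 cardsU; lia.
have outSR : {in S :\: R, forall y, #|N y :&: (S :\: R)| <= d}.
  move=> y /setDP[yS _]; apply: leq_trans (outS y yS).
  by apply/subset_leq_card/setIS/subsetDl.
have bigSR : (2 * d).+1 * k < #|S :\: R|.
  have : #|S :&: R| <= #|R| by apply/subset_leq_card/subsetIr.
  rewrite cardsD; lia.
have [X [subX cardX indX]] := IH _ outSR bigSR.
have XnotR y : y \in X -> y \in S /\ y \notin R by move/(subsetP subX)/setDP.
exists (x |: X); split.
- by rewrite subUset sub1set xS (subset_trans subX) ?subsetDl.
- have xX : x \notin X by apply/negP => /XnotR[_]; rewrite setU11.
  by rewrite cardsU1 xX cardX.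
- apply: independentU1 => // y /XnotR[yS]; rewrite !inE yS andbT negb_or.
  by case/andP=> _ /norP[].
Qed.

End BoundedOutDegree.

Lemma card_set3_neq (T : finType) (a b c : T) :
  #|[set a; b; c]| = 3 -> [/\ a != b, a != c & b != c].
Proof.
rewrite -setUA cardsU1 cards2 in_set2 negb_or.
by case: (a != b); case: (a != c); case: (b != c).
Qed.

Lemma K2t_trace_of_edges (T : finType) (t : nat) (H : {set {set T}})
    (c : 'I_2 -> T) (x : 'I_t -> T) (g : 'I_2 -> T -> {set T}) :
    injective c -> (forall i j, c i != x j) ->
    (forall i j, g i (x j) \in H) ->
    (forall i j, c i \in g i (x j)) -> (forall i j, x j \in g i (x j)) ->
    (forall i i' j, c i' \in g i (x j) -> i' = i) ->
    (forall i j j', x j' \in g i (x j) -> j' = j) ->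
  contains_K2t_trace t H.
Proof.
move=> c_inj c_x gH c_g x_g g_c g_x.
have x_inj : injective x by move=> j j' xjj'; apply: (g_x ord0); rewrite -xjj'.
pose w p := match p with inl i => c i | inr j => x j end.
exists w, (fun p => g p.1 (x p.2)); split.
- case=> [i|j] [i'|j'] /= eq_w; first by rewrite (c_inj _ _ eq_w).
  + by have := c_x i j'; rewrite eq_w eqxx.
  + by have := c_x i' j; rewrite eq_w eqxx.
  + by rewrite (x_inj _ _ eq_w).
- case=> i j [i' j'] /= eq_g.
  have ii' : i' = i by apply: (g_c i i' j); rewrite eq_g.
  by subst i'; congr (_, _); apply: (g_x i j' j); rewrite -eq_g.
- by case=> i j; apply: gH.
case=> i j; apply/setP => z; rewrite /K2t_ends /= in_setI.
apply/andP/set2P => [[zg /imsetP[p _ zw]]|[]->].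
- subst z; case: p zg => [i'|j'] /= zg.
  + by left; rewrite (g_c _ _ _ zg).
  + by right; rewrite (g_x _ _ _ zg).
- by split; [apply: c_g | apply/imsetP; exists (inl i); rewrite ?in_setT].
- by split; [apply: x_g | apply/imsetP; exists (inr j); rewrite ?in_setT].
Qed.

Lemma mem_N1 (T : finType) (H : {set {set T}}) (e : {set T}) (x z : T) :
  e \in setB H -> x \in e -> z \in e -> z != x -> z \in N1 H x.
Proof.
by move=> eB xe ze zx; rewrite inE zx; apply/exists_inP; exists e; rewrite ?xe.
Qed.

Section Neighbourhoods.
Variables (T : finType) (H : {set {set T}}) (v : T).

Definition Eu_edge (a x : T) : {set T} := odflt set0 [pick e in Eu H v a | x \in e].

Lemma Eu_edge_in_Eu (a x : T) : x \in Vu H v a -> Eu_edge a x \in Eu H v a.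
Proof.
case/setIdP=> _ /exists_inP[e eE xe]; rewrite /Eu_edge.
by case: pickP => [e' /andP[]//|/(_ e)]; rewrite eE xe.
Qed.

Lemma mem_Eu_edge (a x : T) : x \in Vu H v a -> x \in Eu_edge a x.
Proof.
case/setIdP=> _ /exists_inP[e eE xe]; rewrite /Eu_edge.
by case: pickP => [e' /andP[]//|/(_ e)]; rewrite eE xe.
Qed.

Lemma Eu_sub (a : T) : Eu H v a \subset H.
Proof. by apply/subsetP => e /setIdP[/setDP[]]. Qed.

Lemma mem_Eu_N1 (a z : T) (e : {set T}) :
  e \in Eu H v a -> (z \in e) && (z \in N1 H v) = (z == a).
Proof. by case/setIdP=> _ /eqP eN1; rewrite -in_setI eN1 inE. Qed.

Lemma Vu_notin_N1 (a x : T) : x \in Vu H v a -> x \notin N1 H v.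
Proof. by rewrite !inE => /andP[/andP[/andP[]]]. Qed.

Hypothesis H3 : uniform 3 H.

Lemma card_Eu_off_N1 (a x : T) (e : {set T}) :
  e \in Eu H v a -> x \in e -> x \notin N1 H v -> #|e :\: (x |: N1 H v)| = 1.
Proof.
move=> eE xe xN1.
have := mem_Eu_N1 a eE; rewrite eqxx => /andP[ae aN1].
rewrite cardsD (H3 (subsetP (Eu_sub a) _ eE)).
have -> : e :&: (x |: N1 H v) = [set x; a].
  apply/setP => z; rewrite in_setI in_setU1 in_set2 -(mem_Eu_N1 z eE).
  by case: eqP => [->|_]; rewrite ?xe.
rewrite cards2.
by case: eqP => // xa; move: xN1; rewrite xa aN1.
Qed.

Lemma card_Eu_edges_off_N1 (a b x : T) :
  x \in Vu H v a -> x \in Vu H v b ->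
  #|(Eu_edge a x :|: Eu_edge b x) :\: (x |: N1 H v)| <= 2.
Proof.
move=> xa xb; rewrite setDUl; apply: leq_trans (leq_card_setU _ _) _.
have xN1 := Vu_notin_N1 xa.
rewrite (card_Eu_off_N1 (Eu_edge_in_Eu xa) (mem_Eu_edge xa) xN1).
by rewrite (card_Eu_off_N1 (Eu_edge_in_Eu xb) (mem_Eu_edge xb) xN1).
Qed.

Lemma card_Vu_meet_le (t : nat) (u w : T) :
  0 < t -> ~ contains_K2t_trace t H ->
  u \in N1 H v -> w \in N1 H v -> u != w ->
  #|Vu H v u :&: Vu H v w| <= 5 * t.-1.
Proof.
move=> t_gt0 noK uN1 wN1 uw; rewrite leqNgt; apply/negP => big; apply: noK.
pose S := Vu H v u :&: Vu H v w.
pose N x := (Eu_edge u x :|: Eu_edge w x) :\: (x |: N1 H v).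
have outS : {in S, forall x, #|N x :&: S| <= 2}.
  move=> x /setIP[xu xw]; apply: leq_trans (card_Eu_edges_off_N1 xu xw).
  exact/subset_leq_card/subsetIl.
have [X [XS cardX indX]] := exists_independent_subset outS big.
rewrite prednK // in cardX.
pose x (j : 'I_t) := enum_val (cast_ord (esym cardX) j).
pose c := tnth [tuple u; w].
have c_uw i : c i = u \/ c i = w.
  by have := mem_tnth i [tuple u; w]; rewrite !inE => /orP[]/eqP; [left|right].
have xS j : x j \in S by apply: (subsetP XS); apply: enum_valP.
have xV i j : x j \in Vu H v (c i) by case/setIP: (xS j); case: (c_uw i) => ->.
have cN1 i : c i \in N1 H v by case: (c_uw i) => ->.
have c_inj : injective c by apply/tuple_uniqP; rewrite /= inE andbT.
apply: (K2t_trace_of_edges c_inj (x := x) (g := fun i => Eu_edge (c i)))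
  => // [i j|i j|i j|i j|i i' j|i j j'].
- by apply: contraNneq (Vu_notin_N1 (xV i j)) => <-.
- exact: subsetP (Eu_sub (c i)) _ (Eu_edge_in_Eu (xV i j)).
- by have := mem_Eu_N1 (c i) (Eu_edge_in_Eu (xV i j)); rewrite eqxx => /andP[].
- exact: mem_Eu_edge.
- move=> ci'_g; apply: c_inj; apply/eqP.
  by rewrite -(mem_Eu_N1 _ (Eu_edge_in_Eu (xV i j))) ci'_g cN1.
- move=> xj'_g; apply: contraTeq xj'_g => j'j.
  have xjj' : x j != x j' by apply: contra j'j => /eqP/enum_val_inj/cast_ord_inj->.
  apply: contra (indX _ _ (enum_valP _) (enum_valP _) xjj') => xj'_g.
  change (x j' \in N (x j)); rewrite in_setD in_setU1 in_setU (eq_sym (x j')).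
  rewrite (negbTE xjj') (negbTE (Vu_notin_N1 (xV i j'))).
  by case: (c_uw i) xj'_g => -> ->; rewrite ?orbT.
Qed.

End Neighbourhoods.

Theorem mainTheorem6 (T : finType) (t : nat) (H : {set {set T}}) :
  3 <= t ->
  uniform 3 H ->
  ~ contains_K2t_trace t H ->
  forall v u w : T, [set v; u; w] \in setB H ->
    #|Vu H v u :&: Vu H v w| <= (t - 1) * (6 * t - 2).
Proof.
move=> t_ge3 H3 noK v u w eB.
have eH : [set v; u; w] \in H by case/setDP: eB.
have [vu vw uw] := card_set3_neq (H3 _ eH).
have uN1 : u \in N1 H v by apply: mem_N1 eB _ _ _; rewrite ?inE ?eqxx ?orbT // eq_sym.
have wN1 : w \in N1 H v by apply: mem_N1 eB _ _ _; rewrite ?inE ?eqxx ?orbT // eq_sym.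
apply: leq_trans (card_Vu_meet_le H3 _ noK uN1 wN1 uw) _; nia.
Qed.
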